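(* Consider the clique inference problem with a max-like clique potential $C(\mathbf{v})=\max_{v\in V} f_v(n_v(\mathbf{v}))$, where each $f_v:\{0,1,\dots,n\}\to\mathbb{R}$ is non-decreasing. Then the $\alpha$-pass algorithm returns an assignment maximizing $F$ (a MAP assignment).
   Context: Clique inference problem: there are $n$ vertices $1,\dots,n$, a finite set $V$ of values, real vertex potentials $\psi_{jv}$ ($1\le j\le n$, $v\in V$), and a symmetric clique potential $C$, i.e. $C(v_1,\dots,v_n)$ depends only on the counts $n_v(\mathbf{v})=|\{j:v_j=v\}|$. The objective is to maximize $F(\mathbf{v})=\sum_{j=1}^n\psi_{jv_j}+C(\mathbf{v})$ over $\mathbf{v}\in V^n$. The $\alpha$-pass algorithm: for each $\alpha\in V$, sort the vertices in decreasing order of $\psi_{j\alpha}-\max_{v\neq\alpha}\psi_{jv}$; for each $k\in\{1,\dots,n\}$ form the assignment $\mathbf{v}^{\alpha,k}$ that gives the first $k$ sorted vertices the value $\alpha$ and every other vertex its best non-$\alpha$ value (a $v\ne\alpha$ maximizing $\psi_{jv}$); output the assignment $\mathbf{v}^{\alpha,k}$ with the largest value of $F$ over all $\alpha\in V$ and $1\le k\le n$. *)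

From mathcomp Require Import all_boot all_order all_algebra.
Set Implicit Arguments. Unset Strict Implicit. Unset Printing Implicit Defensive.
Import Order.TTheory GRing.Theory Num.Theory.
Local Open Scope ring_scope.

Section Clique.
Variables (R : realFieldType) (n : nat) (V : finType).

Definition cnt (w : 'I_n -> V) (v : V) : nat := #|[pred j | w j == v]|.

(* max-like clique potential C(w) = max_{v in V} f_v(n_v(w)).
   (The default value only matters for an empty V, where the max is vacuous.) *)
Definition Cmax (f : V -> nat -> R) (w : 'I_n -> V) : R :=
  match [pick v : V] with
  | Some v0 => \big[Num.max/f v0 (cnt w v0)]_(v : V) f v (cnt w v)
  | None => 0
  end.

Definition Fobj (psi : 'I_n -> V -> R) (f : V -> nat -> R) (w : 'I_n -> V) : R :=
  \sum_(j < n) psi j (w j) + Cmax f w.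

Definition best_non (psi : 'I_n -> V -> R) (b : 'I_n -> V -> V) : Prop :=
  forall j alpha, b j alpha != alpha /\
    (forall v, v != alpha -> psi j v <= psi j (b j alpha)).

Definition margin (psi : 'I_n -> V -> R) (b : 'I_n -> V -> V) (j : 'I_n) (alpha : V) : R :=
  psi j alpha - psi j (b j alpha).

Definition sorted_by_margin (psi : 'I_n -> V -> R) (b : 'I_n -> V -> V)
  (sigma : V -> 'I_n -> 'I_n) : Prop :=
  forall alpha, injective (sigma alpha) /\
    (forall p q : 'I_n, (p <= q)%N ->
       margin psi b (sigma alpha q) alpha <= margin psi b (sigma alpha p) alpha).

Definition cand (b : 'I_n -> V -> V) (sigma : V -> 'I_n -> 'I_n) (alpha : V) (k : nat)
  : 'I_n -> V :=
  fun j => if [exists p : 'I_n, (p < k)%N && (sigma alpha p == j)] then alpha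
           else b j alpha.

End Clique.

From mathcomp Require Import all_boot all_order all_algebra.
Set Implicit Arguments. Unset Strict Implicit. Unset Printing Implicit Defensive.
Import Order.TTheory GRing.Theory Num.Theory.
Local Open Scope ring_scope.

(* Given any assignment w, let a attain the max in C(w) and let beta be a
   value actually used by w, equal to a whenever n_a(w) > 0; put m = n_beta(w).
   Among all assignments using beta exactly m times, v^{beta,m} maximizes the
   vertex part: with t the m-th largest margin, psi_{j w_j} - t [w_j = beta]
   is dominated vertexwise by the same quantity for v^{beta,m}. Its clique part
   is at least f_a(n_a(v^{beta,m})) >= f_a(n_a(w)) = C(w), using monotonicity
   of f_a when beta <> a (then n_a(w) = 0). So F(w) <= F(v^{beta,m}), which the
   alpha-pass output dominates. *)

Section Counts.
Variables (R : realFieldType) (n : nat) (V : finType).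

Lemma le_Cmax (f : V -> nat -> R) (w : 'I_n -> V) v : f v (cnt w v) <= Cmax f w.
Proof.
rewrite /Cmax; case: pickP => [v0 _|/(_ v) //].
by rewrite (bigD1 v) //= le_max lexx.
Qed.

Lemma Cmax_attained (f : V -> nat -> R) (w : 'I_n -> V) :
  V -> exists a, Cmax f w = f a (cnt w a).
Proof.
move=> v1; rewrite /Cmax; case: pickP => [v0 _|/(_ v1) //].
elim/big_ind: _ => [|x y [a ->] [c ->]|a _]; [by exists v0| |by exists a].
by case: leP => _; [exists c | exists a].
Qed.

Lemma cnt_le (w : 'I_n -> V) v : (cnt w v <= n)%N.
Proof. by rewrite /cnt -[X in (_ <= X)%N]card_ord max_card. Qed.

Lemma cnt_gt0 (w : 'I_n -> V) v : (0 < cnt w v)%N = [exists j, w j == v].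
Proof. by rewrite /cnt; apply/card_gt0P/existsP => -[j]; exists j. Qed.

Lemma sum_indicator_cnt (w : 'I_n -> V) v :
  \sum_j ((w j == v)%:R : R) = (cnt w v)%:R.
Proof.
rewrite /cnt -sum1_card natr_sum [RHS]big_mkcond /=.
by apply: eq_bigr => j _; rewrite inE; case: (w j == v).
Qed.

Lemma card_ord_lt m : (m <= n)%N -> #|[set p : 'I_n | (p < m)%N]| = m.
Proof.
move=> le_mn.
have -> : [set p : 'I_n | (p < m)%N] = [set widen_ord le_mn i | i in [set: 'I_m]].
  apply/setP => p; rewrite inE; apply/idP/imsetP => [lt_pm|[i _ ->]]; last exact: (ltn_ord i).
  by exists (Ordinal lt_pm) => //; apply: val_inj.
have inj_widen : injective (widen_ord le_mn) by move=> ? ? /(congr1 val) /= /val_inj.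
by rewrite (card_imset _ inj_widen) cardsT card_ord.
Qed.

End Counts.

Section AlphaPass.
Variables (R : realFieldType) (n : nat) (V : finType).
Variables (psi : 'I_n -> V -> R) (b : 'I_n -> V -> V) (sigma : V -> 'I_n -> 'I_n).
Hypothesis hb : best_non psi b.
Hypothesis hsigma : sorted_by_margin psi b sigma.

Lemma cand_eq beta m j :
  (cand b sigma beta m j == beta) = [exists p : 'I_n, (p < m)%N && (sigma beta p == j)].
Proof.
rewrite /cand; case: ifP => _; first by rewrite eqxx.
by have [/negbTE] := hb j beta.
Qed.

Lemma cnt_cand beta m : (m <= n)%N -> cnt (cand b sigma beta m) beta = m.
Proof.
move=> le_mn; rewrite /cnt -[RHS](card_ord_lt le_mn).
rewrite -(card_imset _ (proj1 (hsigma beta))); apply: eq_card => j.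
rewrite !inE cand_eq; apply/existsP/imsetP => [[p /andP[lt_pm /eqP <-]]|[p]].
  by exists p; rewrite ?inE.
by rewrite inE => lt_pm ->; exists p; rewrite lt_pm eqxx.
Qed.

Lemma cand_margin_ge beta (q : 'I_n) j :
  cand b sigma beta q.+1 j = beta ->
  margin psi b (sigma beta q) beta <= margin psi b j beta.
Proof.
move/eqP; rewrite cand_eq => /existsP[p /andP[le_pq /eqP <-]].
exact: (proj2 (hsigma beta)).
Qed.

Lemma cand_margin_le beta (q : 'I_n) j :
  cand b sigma beta q.+1 j != beta ->
  margin psi b j beta <= margin psi b (sigma beta q) beta.
Proof.
have [inj_sigma sorted_sigma] := hsigma beta.
have [g _ sigmaK] := injF_bij inj_sigma.
rewrite cand_eq => notin; rewrite -{1}(sigmaK j); apply: sorted_sigma.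
rewrite leqNgt; apply: contra notin => lt_qg; apply/existsP.
by exists (g j); rewrite ltnS ltnW // sigmaK eqxx.
Qed.

Lemma penalized_le_cand w beta (q : 'I_n) (t := margin psi b (sigma beta q) beta)
    (x := cand b sigma beta q.+1) j :
  psi j (w j) - (w j == beta)%:R * t <= psi j (x j) - (x j == beta)%:R * t.
Proof.
have [b_neq b_best] := hb j beta.
have [x_beta | x_neq] := eqVneq (x j) beta.
  have := cand_margin_ge x_beta; rewrite -/t /margin => t_le.
  have [-> | w_neq] := eqVneq (w j) beta; rewrite x_beta /= ?mul1r ?mul0r ?subr0 //.
  by rewrite (le_trans (b_best _ w_neq)) // lerBrDl -lerBrDr.
have := cand_margin_le x_neq; rewrite -/t /margin => le_t.
have -> : x j = b j beta by move: x_neq; rewrite /x /cand; case: ifP => //; rewrite eqxx.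
have [-> | w_neq] := eqVneq (w j) beta; rewrite /= ?mul1r ?mul0r ?subr0; last exact: b_best.
by rewrite lerBlDr -lerBlDl.
Qed.

Lemma vertex_sum_le_cand w beta :
  (0 < cnt w beta)%N ->
  \sum_j psi j (w j) <= \sum_j psi j (cand b sigma beta (cnt w beta) j).
Proof.
move=> beta_used; have := cnt_le w beta.
case def_m: (cnt w beta) beta_used => [//|m] _ lt_mn.
have := @ler_sum _ _ (index_enum _) xpredT _ _
  (fun j _ => penalized_le_cand w beta (Ordinal lt_mn) j).
rewrite /= !sumrB -!mulr_suml !sum_indicator_cnt cnt_cand // def_m.
by rewrite lerD2r.
Qed.

End AlphaPass.

Theorem theorem1 (R : realFieldType) (n : nat) (V : finType)
  (psi : 'I_n -> V -> R) (f : V -> nat -> R)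
  (f_mono : forall v (i j : nat), (i <= j <= n)%N -> f v i <= f v j)
  (b : 'I_n -> V -> V) (hb : best_non psi b)
  (sigma : V -> 'I_n -> 'I_n) (hsigma : sorted_by_margin psi b sigma)
  (alpha0 : V) (k0 : nat) (hk0 : (1 <= k0 <= n)%N)
  (hout : forall (alpha : V) (k : nat), (1 <= k <= n)%N ->
     Fobj psi f (cand b sigma alpha k) <= Fobj psi f (cand b sigma alpha0 k0)) :
  forall w : 'I_n -> V, Fobj psi f w <= Fobj psi f (cand b sigma alpha0 k0).
Proof.
move=> w.
have n_gt0 : (0 < n)%N by case/andP: hk0; apply: leq_trans.
pose j0 := Ordinal n_gt0.
have [a Cw] := Cmax_attained f w (w j0).
pose beta := if (0 < cnt w a)%N then a else w j0.
have beta_used : (0 < cnt w beta)%N.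
  rewrite /beta; case: ifP => // _; rewrite cnt_gt0; apply/existsP; by exists j0.
have beta_ok : (1 <= cnt w beta <= n)%N by rewrite cnt_le andbT.
apply: le_trans (hout beta _ beta_ok).
rewrite /Fobj lerD ?vertex_sum_le_cand // Cw (le_trans _ (le_Cmax f _ a)) //.
apply: f_mono; rewrite cnt_le andbT.
case: (posnP (cnt w a)) => [-> // | a_used].
by rewrite /beta a_used (cnt_cand hb hsigma) // cnt_le.
Qed.
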